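(* Let $m$ be a positive integer. If $D$ is a quaternary extremal Hermitian self-dual code of length $6m$, then $B_{2i}\equiv 0 \pmod 9$ for every $i=m+1,m+2,\ldots,3m$, where $B_{j}$ denotes the number of codewords of weight $j$ in $D$.
   Context: Let $\mathbb{F}_4=\{0,1,\omega,\omega^2\}$ with $\omega^2=\omega+1$. A quaternary code of length $n$ is a linear subspace of $\mathbb{F}_4^n$; it is Hermitian self-dual if it equals its dual with respect to $\langle x,y\rangle_H=\sum_k x_k y_k^2$. The weight of a vector is the number of its nonzero coordinates. A quaternary Hermitian self-dual code of length $n$ is extremal if its minimum (nonzero) weight equals $2\lfloor n/6\rfloor+2$; for length $6m$ this is $2m+2$. *)

From HB Require Import structures.
From mathcomp Require Import all_boot all_order all_algebra all_field.
Set Implicit Arguments. Unset Strict Implicit. Unset Printing Implicit Defensive.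
Import GRing.Theory.
Local Open Scope ring_scope.

(* Quaternary codes: F is a finite field with #|F| = 4 (i.e. F_4, unique up to
   isomorphism). A linear code of length n is a subspace of 'rV[F]_n. *)

Definition wt (F : finFieldType) (n : nat) (x : 'rV[F]_n) : nat :=
  #|[set k : 'I_n | x 0 k != 0]|.

Definition herm (F : finFieldType) (n : nat) (x y : 'rV[F]_n) : F :=
  \sum_(k < n) x 0 k * (y 0 k) ^+ 2.

Definition herm_self_dual (F : finFieldType) (n : nat) (D : {vspace 'rV[F]_n}) : Prop :=
  forall y : 'rV[F]_n, (y \in D) <-> (forall x : 'rV[F]_n, x \in D -> herm x y = 0).

Definition min_weight (F : finFieldType) (n : nat) (D : {vspace 'rV[F]_n}) (d : nat) : Prop :=
  (exists2 x : 'rV[F]_n, (x \in D) && (x != 0) & wt x = d) /\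
  (forall x : 'rV[F]_n, x \in D -> x != 0 -> (d <= wt x)%N).

Definition extremal (F : finFieldType) (n : nat) (D : {vspace 'rV[F]_n}) : Prop :=
  min_weight D (2 * (n %/ 6) + 2)%N.

Definition wdist (F : finFieldType) (n : nat) (D : {vspace 'rV[F]_n}) (j : nat) : nat :=
  #|[set x : 'rV[F]_n | (x \in D) && (wt x == j)]|.

(* The additive character chi(a) = (-1)^(Tr a) of F_4 turns Hermitian
   self-duality into the MacWilliams identity
     |D| W(X) = sum_j B_j (1 + 3X)^(n - j) (1 - X)^j,   W(X) = sum_j B_j X^j,
   which at X = 1 gives |D| = 2^n.  Modulo 3 the right-hand side is W(1 - X),
   so W - 1 is invariant under X -> 1 - X and, all weights being even, under
   X -> -X.  By extremality X^(2m+2) divides W - 1, hence so do (X - 1)^(2m+2)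
   and (X + 1)^(2m+2); as deg (W - 1) <= 6m, W = 1 modulo 3.  Writing
   W = 1 + 3C, the congruences 2^(6m) = 1 and (1 + 3X)^(6m) = 1 modulo 9 turn
   the identity into C(1 - X) = C(X) modulo 3, and the same argument shows
   that 3 divides C. *)

From HB Require Import structures.
From mathcomp Require Import all_boot all_order all_algebra all_field.
From mathcomp Require Import ring zify.
Set Implicit Arguments. Unset Strict Implicit. Unset Printing Implicit Defensive.
Import GRing.Theory Num.Theory.
Local Open Scope ring_scope.

Lemma sum_sign_reversing (R : numDomainType) (T : finType) (A : {pred T})
    (f : T -> R) (h : T -> T) :
  injective h -> (forall x, (h x \in A) = (x \in A)) ->
  (forall x, f (h x) = - f x) -> \sum_(x in A) f x = 0.
Proof.
move=> h_inj hA fh; set S := \sum_(x in A) f x.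
have SN : S = - S.
  by rewrite {1}/S (reindex_inj h_inj) /= -sumrN; apply: eq_big => x; rewrite ?hA ?fh.
have : S *+ 2 == 0 by rewrite mulr2n {1}SN addNr.
by rewrite mulrn_eq0 => /eqP.
Qed.

Section CharacterF4.
Variable F : finFieldType.
Hypothesis F4 : #|F| = 4%N.

Lemma pchar2_F4 : 2%N \in [pchar F].
Proof. exact: (@card_finPcharP _ 2 2). Qed.

Lemma expr4_F4 (a : F) : a ^+ 4 = a.
Proof. by rewrite -F4 expf_card. Qed.

Lemma sqrF4_inj : injective (fun a : F => a ^+ 2).
Proof. by move=> a b /= ab; rewrite -[a]expr4_F4 -[b]expr4_F4 !(exprM _ 2 2) ab. Qed.

Lemma sqrF4D (a b : F) : (a + b) ^+ 2 = a ^+ 2 + b ^+ 2.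
Proof. by rewrite sqrrD (mulrn_pchar pchar2_F4) addr0. Qed.

Lemma expr3_F4 (a : F) : a != 0 -> a ^+ 3 = 1.
Proof. by move=> a0; apply: (mulfI a0); rewrite -exprS expr4_F4 mulr1. Qed.

Definition trF4 (a : F) : F := a + a ^+ 2.

Lemma trF4D a b : trF4 (a + b) = trF4 a + trF4 b.
Proof. by rewrite /trF4 sqrF4D addrACA. Qed.

Lemma trF4_01 a : trF4 a = 0 \/ trF4 a = 1.
Proof.
have idem : trF4 a ^+ 2 = trF4 a.
  by rewrite /trF4 sqrF4D -exprM expr4_F4 addrC.
have : trF4 a * (trF4 a - 1) == 0 by rewrite mulrBr mulr1 -expr2 idem subrr.
by rewrite mulf_eq0 subr_eq0 => /orP[] /eqP; [left | right].
Qed.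

Definition chiF4 (a : F) : int := if trF4 a == 0 then 1 else -1.

Lemma chiF4_0 : chiF4 0 = 1.
Proof. by rewrite /chiF4 /trF4 expr0n addr0 eqxx. Qed.

Lemma chiF4D a b : chiF4 (a + b) = chiF4 a * chiF4 b.
Proof.
rewrite /chiF4 trF4D.
by case: (trF4_01 a) => ->; case: (trF4_01 b) => ->;
  rewrite ?addr0 ?add0r ?(addrr_pchar2 pchar2_F4) ?eqxx ?oner_eq0.
Qed.

Lemma chiF4_nontrivial : exists a, chiF4 a = -1.
Proof.
case: (boolP [forall a, trF4 a == 0]) => [/forallP tr0 | /forallPn[a tra]]; last first.
  by exists a; rewrite /chiF4 (negbTE tra).
suff /subset_leq_card : [set: F] \subset [set 0; 1].
  by rewrite cardsT F4 cards2; case: (_ != _).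
apply/subsetP => a _.
have : a * (a - 1) == 0.
  by rewrite mulrBr mulr1 -expr2 (oppr_pchar2 pchar2_F4) addrC tr0.
by rewrite mulf_eq0 subr_eq0 !inE.
Qed.

Lemma sum_chiF4_sqr (c : F) : c != 0 -> \sum_a chiF4 (c * a ^+ 2) = 0.
Proof.
move=> c0; case: chiF4_nontrivial => a0 chi_a0.
rewrite [LHS](_ : _ = \sum_a chiF4 (c * a)); last by rewrite [RHS](reindex_inj sqrF4_inj).
apply: (sum_sign_reversing (addIr (a0 / c))) => // a.
by rewrite mulrDr mulrCA divff // mulr1 chiF4D chi_a0 mulrN1.
Qed.

End CharacterF4.

Lemma prod_if_const (R : comPzSemiRingType) (I : finType) (P : pred I) (a b : R) :
  \prod_i (if P i then a else b) = a ^+ #|P| * b ^+ #|[predC P]|.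
Proof.
rewrite (bigID P) /= -!prodr_const.
by congr (_ * _); apply: eq_big => // i; [move=> -> | move=> /negbTE ->].
Qed.

Section HermitianF4.
Variables (F : finFieldType) (n : nat).
Hypothesis F4 : #|F| = 4%N.
Implicit Types x u : 'rV[F]_n.

Lemma hermDl x y u : herm (x + y) u = herm x u + herm y u.
Proof. by rewrite /herm -big_split; apply: eq_bigr => k _; rewrite mxE mulrDl. Qed.

Lemma hermZl t x u : herm (t *: x) u = t * herm x u.
Proof. by rewrite /herm mulr_sumr; apply: eq_bigr => k _; rewrite mxE mulrA. Qed.

Lemma herm_diag_F4 x : herm x x = (wt x)%:R.
Proof.
rewrite /herm /wt -sum1_card natr_sum [RHS]big_mkcond /=; apply: eq_bigr => k _.
by rewrite inE -exprS; case: eqP => [-> | /eqP/expr3_F4 ->]; rewrite ?expr0n.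
Qed.

Lemma chiF4_herm x u : chiF4 (herm x u) = \prod_k chiF4 (x 0 k * u 0 k ^+ 2).
Proof. exact: (big_morph _ (chiF4D F4) (chiF4_0 F)). Qed.

Lemma Xn_wt u : 'X^(wt u) = \prod_k (if u 0 k != 0 then 'X else 1) :> {poly int}.
Proof. by rewrite prod_if_const expr1n mulr1 /wt cardsE. Qed.

Lemma sum_chiF4_coord (b : F) :
  \sum_a (chiF4 (b * a ^+ 2))%:P * (if a != 0 then 'X else 1)
    = if b == 0 then 1 + 'X *+ 3 else 1 - 'X.
Proof.
rewrite (bigD1 0) //= eqxx expr0n mulr0 chiF4_0 mulr1.
under eq_bigr => a a0 do rewrite a0.
rewrite -mulr_suml -rmorph_sum; have [-> | b0] := eqVneq b 0.
  under eq_bigr do rewrite mul0r chiF4_0.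
  by rewrite sumr_const (cardC1 0) F4 polyC1 rmorph_nat mulr_natl.
have := sum_chiF4_sqr F4 b0; rewrite (bigD1 0) //= expr0n mulr0 chiF4_0.
by move/eqP; rewrite addrC addr_eq0 => /eqP ->; rewrite rmorphN1 mulN1r polyC1.
Qed.

Lemma prod_coord_kernel x :
  \prod_k (if x 0 k == 0 then 1 + 'X *+ 3 else 1 - 'X)
    = (1 + 'X *+ 3) ^+ (n - wt x) * (1 - 'X) ^+ (wt x) :> {poly int}.
Proof.
have wt_pred : wt x = #|[predC [pred k | x 0 k == 0]]|.
  by apply: eq_card => k; rewrite !inE.
rewrite prod_if_const wt_pred -[n in (n - _)%N]card_ord.
by rewrite -(cardC [pred k | x 0 k == 0]) addnK.
Qed.

Lemma sum_chiF4_herm_Xwt x :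
  \sum_u (chiF4 (herm x u))%:P * 'X^(wt u)
    = (1 + 'X *+ 3) ^+ (n - wt x) * (1 - 'X) ^+ (wt x).
Proof.
rewrite -prod_coord_kernel.
under eq_bigr => k _ do rewrite -sum_chiF4_coord.
rewrite bigA_distr_bigA /=.
rewrite [RHS](reindex (fun u : 'rV[F]_n => [ffun k => u 0 k])) /=; last first.
  exists (fun f : {ffun 'I_n -> F} => \row_k f k) => [u _ | f _].
    by apply/rowP => k; rewrite mxE ffunE.
  by apply/ffunP => k; rewrite ffunE mxE.
apply: eq_bigr => u _.
rewrite chiF4_herm Xn_wt rmorph_prod -big_split /=; apply: eq_bigr => k _.
by rewrite ffunE.
Qed.

End HermitianF4.

(* [sum_j p_j x^(n - j) y^j] at [x = 1 + 3X], [y = 1 - X]: the MacWilliams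
   transform of [p] read as a homogeneous enumerator of length [n]; the
   coefficients of [p] beyond degree [n] are ignored. *)
Definition mw_transform (R : nzRingType) (n : nat) (p : {poly R}) : {poly R} :=
  \sum_(j < n.+1) p`_j *: ((1 + 'X *+ 3) ^+ (n - j) * (1 - 'X) ^+ j).

Section MacWilliamsTransform.
Variables (R : comNzRingType) (n : nat).
Implicit Types p : {poly R}.

Fact mw_transform_is_linear : linear (@mw_transform R n).
Proof.
move=> a p q; rewrite /mw_transform scaler_sumr -big_split /=.
by apply: eq_bigr => j _; rewrite coefD coefZ scalerDl scalerA.
Qed.
HB.instance Definition _ :=
  GRing.isLinear.Build R {poly R} {poly R} _ (mw_transform n) mw_transform_is_linear.

Lemma mw_transformXn j : (j <= n)%N ->
  mw_transform n ('X^j : {poly R}) = (1 + 'X *+ 3) ^+ (n - j) * (1 - 'X) ^+ j.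
Proof.
move=> le_jn; rewrite /mw_transform (bigD1 (Ordinal (leq_ltn_trans le_jn (ltnSn n)))) //=.
rewrite coefXn eqxx scale1r big1 ?addr0 // => i ne_ij.
rewrite coefXn; suff /negbTE -> : (i != j :> nat) by rewrite scale0r.
by apply: contra ne_ij => /eqP ij; apply/eqP/val_inj.
Qed.

Lemma mw_transform1 : mw_transform n (1 : {poly R}) = (1 + 'X *+ 3) ^+ n.
Proof. by rewrite -(expr0 'X) mw_transformXn // subn0 expr0 mulr1. Qed.

Lemma horner1_mw_transform p : (mw_transform n p).[1] = p`_0 * 4%:R ^+ n.
Proof.
rewrite /mw_transform horner_sum big_ord_recl big1 ?addr0 => [|j _].
  rewrite subn0 expr0 mulr1 hornerZ horner_exp hornerD hornerMn hornerX hornerC.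
  by rewrite nat1r.
by rewrite hornerZ hornerM !horner_exp !hornerE subrr expr0n /= !mulr0.
Qed.

Lemma mw_transform_pchar3 p : 3%N \in [pchar R] -> (size p <= n.+1)%N ->
  mw_transform n p = p \Po (1 - 'X).
Proof.
move=> pchar3 size_p.
rewrite comp_polyE (big_ord_widen n.+1 (fun j => p`_j *: (1 - 'X) ^+ j)) //.
rewrite /mw_transform [RHS]big_mkcond /=; apply: eq_bigr => j _.
have -> : 'X *+ 3 = 0 :> {poly R} by rewrite -mulr_natr -polyC_natr (pcharf0 pchar3) mulr0.
rewrite addr0 expr1n mul1r; case: ltnP => // le_size_j.
by rewrite nth_default ?scale0r.
Qed.

End MacWilliamsTransform.

Lemma map_mw_transform (R S : comNzRingType) (f : {rmorphism R -> S}) n (p : {poly R}) :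
  map_poly f (mw_transform n p) = mw_transform n (map_poly f p).
Proof.
rewrite /mw_transform rmorph_sum; apply: eq_bigr => j _.
rewrite -!mul_polyC !rmorphM /= map_polyC !rmorphXn rmorphD rmorphB rmorphMn /=.
by rewrite map_polyX rmorph1 coef_map.
Qed.

Definition wenum (F : finFieldType) (n : nat) (D : {vspace 'rV[F]_n}) : {poly int} :=
  \sum_(x in D) 'X^(wt x).

Section WeightEnumerator.
Variables (F : finFieldType) (n : nat) (D : {vspace 'rV[F]_n}).
Implicit Types x : 'rV[F]_n.

Lemma wt_le x : (wt x <= n)%N.
Proof. by rewrite /wt -[n in (_ <= n)%N]card_ord max_card. Qed.

Lemma wt_eq0 x : (wt x == 0)%N = (x == 0).
Proof.
rewrite /wt cards_eq0; apply/eqP/eqP => [x0 | ->]; last first.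
  by apply/setP => k; rewrite !inE mxE eqxx.
apply/rowP => k; rewrite mxE; apply/eqP; apply: contraT => xk.
by have := in_set0 k; rewrite -x0 inE xk.
Qed.

Lemma coef_wenum j : (wenum D)`_j = (wdist D j)%:R.
Proof.
rewrite /wenum coef_sum /wdist -sum1_card natr_sum.
rewrite big_mkcond [RHS]big_mkcond; apply: eq_bigr => x _.
by rewrite coefXn inE eq_sym; case: (x \in D); case: (wt x == j).
Qed.

Lemma size_wenum : (size (wenum D) <= n.+1)%N.
Proof.
rewrite /wenum; apply: (leq_trans (size_sum _ _ _)); apply/bigmax_leqP => x _.
by rewrite size_polyXn ltnS wt_le.
Qed.

Lemma horner1_wenum : (wenum D).[1] = #|D|%:R.
Proof.
rewrite /wenum horner_sum (eq_bigr (fun=> 1)) => [|x _]; last by rewrite hornerXn expr1n.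
by rewrite sumr_const.
Qed.

Lemma wdist0 : wdist D 0 = 1%N.
Proof.
rewrite /wdist (_ : [set x | _] = [set 0]) ?cards1 //.
by apply/setP => x; rewrite !inE wt_eq0; case: eqP => [-> | _]; rewrite ?mem0v ?andbF.
Qed.

Lemma wdist_lt_min_weight d j : min_weight D d -> (0 < j < d)%N -> wdist D j = 0%N.
Proof.
move=> [_ min_d] /andP[j_gt0 j_lt_d]; apply/eqP; rewrite cards_eq0; apply/eqP/setP => x.
rewrite !inE; apply/negP => /andP[xD /eqP wt_x].
have x_neq0 : x != 0 by rewrite -wt_eq0 wt_x -lt0n.
by have := min_d x xD x_neq0; rewrite wt_x leqNgt j_lt_d.
Qed.

End WeightEnumerator.

Section SelfDualCodeF4.
Variables (F : finFieldType) (n : nat) (D : {vspace 'rV[F]_n}).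
Hypotheses (F4 : #|F| = 4%N) (D_self_dual : herm_self_dual D).

Lemma sum_chiF4_herm_code (u : 'rV[F]_n) :
  \sum_(x in D) chiF4 (herm x u) = if u \in D then #|D|%:R else 0.
Proof.
have [uD | uD] := boolP (u \in D).
  rewrite -sumr_const; apply: eq_bigr => x xD.
  by rewrite ((D_self_dual u).1 uD x xD) chiF4_0.
have /existsP[x0 /andP[x0D hx0]] : [exists x, (x \in D) && (herm x u != 0)].
  apply: contraR uD => /existsPn no_x; apply/(D_self_dual u).2 => x xD.
  by apply/eqP; move: (no_x x); rewrite xD negbK.
have [a0 chi_a0] := chiF4_nontrivial F4.
apply: (sum_sign_reversing (addIr ((a0 / herm x0 u) *: x0))) => [x|x].
  by rewrite rpredDr // memvZ.
by rewrite hermDl hermZl mulrAC -mulrA divff // mulr1 chiF4D // chi_a0 mulrN1.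
Qed.

Lemma macwilliams_sum :
  \sum_(x in D) (1 + 'X *+ 3) ^+ (n - wt x) * (1 - 'X) ^+ (wt x) = #|D|%:R *: wenum D.
Proof.
under eq_bigr => x _ do rewrite -(sum_chiF4_herm_Xwt F4).
rewrite exchange_big /= /wenum scaler_sumr [RHS]big_mkcond /=; apply: eq_bigr => u _.
rewrite -mulr_suml -rmorph_sum sum_chiF4_herm_code.
by case: ifP => _; rewrite ?rmorph0 ?mul0r // rmorph_nat mulr_natl scaler_nat.
Qed.

Lemma mw_transform_wenum : mw_transform n (wenum D) = #|D|%:R *: wenum D.
Proof.
rewrite -macwilliams_sum /wenum raddf_sum.
by apply: eq_bigr => x _; apply: mw_transformXn; exact: wt_le.
Qed.

Lemma card_self_dual : #|D| = (2 ^ n)%N.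
Proof.
have := congr1 (horner^~ 1) mw_transform_wenum.
rewrite /= horner1_mw_transform hornerZ horner1_wenum coef_wenum wdist0 mul1r.
rewrite -natrX -natrM => /eqP; rewrite eqr_nat => /eqP sq_card.
by apply/eqP; rewrite -(@eqn_exp2r _ _ 2) // expnAC sq_card mulnn.
Qed.

Lemma wdist_odd j : odd j -> wdist D j = 0%N.
Proof.
move=> odd_j; apply/eqP; rewrite cards_eq0; apply/eqP/setP => x.
rewrite !inE; apply/negP => /andP[xD /eqP wt_x].
have := (D_self_dual x).1 xD x xD; rewrite herm_diag_F4 // => /eqP.
by rewrite -(dvdn_pcharf (pchar2_F4 F4)) wt_x dvdn2 odd_j.
Qed.

End SelfDualCodeF4.

Lemma comp_poly_oppX_even (R : comNzRingType) (p : {poly R}) :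
  (forall j, odd j -> p`_j = 0) -> p \Po (- 'X) = p.
Proof.
move=> p_odd; have odd_p0 : odd_poly p = 0.
  by apply/polyP => j; rewrite coef_odd_poly coef0 p_odd //= odd_double.
have def_p := poly_even_odd p; rewrite odd_p0 comp_poly0 mul0r addr0 in def_p.
by rewrite -def_p -comp_polyA comp_Xn_poly sqrrN.
Qed.

Lemma dvdp_Xn_coef0 (K : fieldType) (k : nat) (p : {poly K}) :
  (forall j, (j < k)%N -> p`_j = 0) -> 'X^k %| p.
Proof.
move=> p_low; have take0 : take_poly k p = 0.
  by apply/polyP => j; rewrite coef_take_poly coef0; case: ltnP => // /p_low.
by rewrite -(poly_take_drop k p) take0 add0r dvdp_mull.
Qed.

Lemma invariant_poly_eq0 (K : fieldType) (k : nat) (p : {poly K}) :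
  2%:R != 0 :> K -> p \Po (1 - 'X) = p -> p \Po (- 'X) = p ->
  'X^k %| p -> (size p <= 3 * k)%N -> p = 0.
Proof.
move=> two_neq0 p_1X p_NX Xk_dvd size_p.
pose q a : {poly K} := ('X - a%:P) ^+ k.
have q0_dvd : q 0 %| p by rewrite /q subr0.
have q1_dvd : q 1 %| p.
  have := dvdp_comp_poly (1 - 'X) Xk_dvd; rewrite p_1X comp_Xn_poly.
  by apply: dvdp_trans; apply: dvdp_exp2r; rewrite polyC1 -[1 - 'X]opprB dvdpNr.
have qN1_dvd : q (-1) %| p.
  have := dvdp_comp_poly (- 'X) q1_dvd; rewrite p_NX /q rmorphXn /=.
  rewrite comp_polyB comp_polyX comp_polyC; apply: dvdp_trans; apply: dvdp_exp2r.
  by rewrite polyCN opprK -opprD dvdpNr.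
have coprime_q a b : b - a != 0 -> coprimep (q a) (q b).
  by move=> ab; apply/coprimep_expl/coprimep_expr/coprimep_XsubC2.
have q_dvd : q 0 * q 1 * q (-1) %| p.
  rewrite Gauss_dvdp ?Gauss_dvdp ?q0_dvd ?q1_dvd ?coprimepMl ?coprime_q //;
    by rewrite ?subr0 ?oppr_eq0 ?oner_eq0 // -opprD oppr_eq0.
have q_neq0 a : q a != 0 by rewrite -size_poly_eq0 size_exp_XsubC.
apply: contraTeq size_p => p_neq0; rewrite -ltnNge.
have := dvdp_leq p_neq0 q_dvd; rewrite !size_mul ?mulf_neq0 // !size_exp_XsubC.
by apply: leq_trans; lia.
Qed.

Local Notation red3 := (map_poly (intr : int -> 'F_3)).

Lemma size_red3 (p : {poly int}) : (size (red3 p) <= size p)%N.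
Proof. by apply/leq_sizeP => j le_j; rewrite coef_map nth_default. Qed.

Lemma red3_mw_transform n (p : {poly int}) : (size p <= n.+1)%N ->
  red3 (mw_transform n p) = red3 p \Po (1 - 'X).
Proof.
move=> size_p; rewrite map_mw_transform mw_transform_pchar3 ?pchar_Fp //.
exact: leq_trans (size_red3 p) size_p.
Qed.

Lemma red3_mulrn3 (r : {poly int}) : red3 (r *+ 3) = 0.
Proof. by rewrite rmorphMn mulrn_pchar // pchar_poly pchar_Fp. Qed.

Lemma coef_dvd3_of_red3_invariant (k : nat) (p : {poly int}) :
  (forall j, (j < k)%N -> p`_j = 0) -> (forall j, odd j -> p`_j = 0) ->
  (size p <= 3 * k)%N -> red3 p \Po (1 - 'X) = red3 p -> forall j, (3 %| p`_j)%Z.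
Proof.
move=> p_low p_odd size_p p_inv j.
rewrite (dvdz_pcharf (pchar_Fp _)) // -coef_map.
suff -> : red3 p = 0 by rewrite coef0.
apply: (invariant_poly_eq0 (k := k)) => //.
- by apply: comp_poly_oppX_even => i /p_odd; rewrite coef_map => ->.
- by apply: dvdp_Xn_coef0 => i /p_low; rewrite coef_map => ->.
- exact: leq_trans (size_red3 p) size_p.
Qed.

Lemma expr1D_mul (R : comNzRingType) (a y : R) (N : nat) :
  exists z, (1 + a * y) ^+ N = 1 + a * z.
Proof.
elim: N => [|N [z IH]]; first by exists 0; rewrite expr0 mulr0 addr0.
by exists (y + z + a * y * z); rewrite exprS IH; ring.
Qed.

Lemma red3_mw_invariant n (C : {poly int}) :
  ~~ odd n -> (size C <= n.+1)%N ->
  mw_transform n (1 + C) = 2 ^+ n *: (1 + C) -> red3 C \Po (1 - 'X) = red3 C.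
Proof.
move=> even_n size_C C_mw.
have red3_2n : (2 ^+ n : int)%:~R = 1 :> 'F_3.
  rewrite rmorphXn /= (_ : 2%:~R = -1 :> 'F_3); last by apply/eqP.
  by rewrite -signr_odd (negbTE even_n).
have size_1C : (size (1 + C)%R <= n.+1)%N.
  by rewrite (leq_trans (size_polyD _ _)) // geq_max size_poly1.
have := congr1 red3 C_mw; rewrite red3_mw_transform // map_polyZ /= red3_2n scale1r.
by rewrite rmorphD rmorph1 comp_polyD comp_polyC => /addrI.
Qed.

Lemma red3_mw_invariant_div3 m (C : {poly int}) : (size C <= (6 * m).+1)%N ->
  mw_transform (6 * m) (1 + C *+ 3) = 2 ^+ (6 * m) *: (1 + C *+ 3) ->
  red3 C \Po (1 - 'X) = red3 C.
Proof.
move=> size_C C_mw.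
have [e def_e] : exists e : int, 2 ^+ (6 * m) = 1 + 9%:R * e.
  by rewrite exprM (_ : 2 ^+ 6 = 1 + 9%:R * 7) //; apply: expr1D_mul.
have [Q def_Q] : exists Q, (1 + 'X *+ 3) ^+ (6 * m) = 1 + 9%:R * Q :> {poly int}.
  rewrite (_ : (6 * m = 3 * (2 * m))%N); last by rewrite mulnA.
  rewrite exprM.
  rewrite (_ : _ ^+ 3 = 1 + 9%:R * ('X + 3%:R * 'X ^+ 2 + 3%:R * 'X ^+ 3)); last by ring.
  exact: expr1D_mul.
have : (mw_transform (6 * m) C - C) *+ 3 = (e%:P * (1 + C *+ 3) - Q) *+ 3 *+ 3.
  move: C_mw; rewrite raddfD raddfMn /= mw_transform1 def_Q -mul_polyC def_e.
  rewrite rmorphD rmorphM /= rmorph1 rmorph_nat => /(canRL (addKr _)) T3.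
  by rewrite mulrnBl T3; ring.
have three_neq0 : 3%:R != 0 :> {poly int} by rewrite -polyC_natr polyC_eq0.
rewrite -[LHS]mulr_natl -[RHS]mulr_natl => /(mulfI three_neq0) TC.
rewrite -(red3_mw_transform (n := (6 * m)%N)) //.
by apply/eqP; rewrite -subr_eq0 -rmorphB TC; apply/eqP/red3_mulrn3.
Qed.

Lemma coef_dvd9_of_mw_invariant (m : nat) (C : {poly int}) :
  (forall j, (j < 2 * m + 2)%N -> C`_j = 0) -> (forall j, odd j -> C`_j = 0) ->
  (size C <= (6 * m).+1)%N ->
  mw_transform (6 * m) (1 + C) = 2 ^+ (6 * m) *: (1 + C) ->
  forall j, (9 %| C`_j)%Z.
Proof.
move=> C_low C_odd size_C C_mw.
have size_C3 : (size C <= 3 * (2 * m + 2))%N by lia.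
have C_div3 : forall j, (3 %| C`_j)%Z.
  apply: (coef_dvd3_of_red3_invariant C_low C_odd size_C3).
  by apply: (red3_mw_invariant _ size_C C_mw); rewrite oddM.
pose C' := \poly_(j < size C) (C`_j %/ 3)%Z.
have def_C : C = C' *+ 3.
  apply/polyP => j; rewrite coefMn coef_poly.
  case: ltnP => [_ | le_j]; last by rewrite nth_default.
  by rewrite -[_ *+ 3]mulr_natr natz divzK.
have C'_low j : (j < 2 * m + 2)%N -> C'`_j = 0.
  by move=> lt_j; rewrite coef_poly C_low // div0z if_same.
have C'_odd j : odd j -> C'`_j = 0.
  by move=> odd_j; rewrite coef_poly C_odd // div0z if_same.
have size_C' : (size C' <= size C)%N by exact: size_poly.
have C'_div3 : forall j, (3 %| C'`_j)%Z.
  apply: (coef_dvd3_of_red3_invariant C'_low C'_odd (leq_trans size_C' size_C3)).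
  by apply: (red3_mw_invariant_div3 (leq_trans size_C' size_C)); rewrite -def_C.
move=> j; rewrite def_C coefMn -[C'`_j *+ 3]mulr_natr natz.
exact: dvdz_mul (C'_div3 j) (dvdzz 3).
Qed.

Local Close Scope ring_scope.

Theorem corollary3p6 (F : finFieldType) (m : nat) (D : {vspace 'rV[F]_(6 * m)}) :
  #|F| = 4 -> (0 < m)%N -> herm_self_dual D -> extremal D ->
  forall i : nat, (m + 1 <= i <= 3 * m)%N -> (9 %| wdist D (2 * i))%N.
Proof.
move=> F4 _ D_self_dual D_extremal i /andP[lt_m_i _].
pose C := (wenum D - 1)%R.
have coef_C j : (C`_j = (wdist D j)%:R - (j == 0)%:R)%R.
  by rewrite coefB coef_wenum coef1.
have two_i_neq0 : 2 * i != 0 by rewrite muln_eq0 -lt0n (leq_trans _ lt_m_i) ?addn1.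
suff : (9 %| (C`_(2 * i))%R)%Z.
  by rewrite coef_C (negbTE two_i_neq0) subr0 (natz (wdist D (2 * i))).
apply: (coef_dvd9_of_mw_invariant (m := m) (C := C)) => [j lt_j | j odd_j | |].
- have [-> | j_neq0] := eqVneq j 0; first by rewrite coef_C wdist0 subrr.
  rewrite coef_C (negbTE j_neq0) (wdist_lt_min_weight D_extremal) ?subrr //.
  by rewrite lt0n j_neq0 mulKn.
- have j_neq0 : j != 0 by apply: contraTneq odd_j => ->.
  by rewrite coef_C wdist_odd // (negbTE j_neq0) subrr.
- by rewrite (leq_trans (size_polyD _ _)) // geq_max size_wenum size_polyN size_poly1.
- by rewrite /C addrC subrK mw_transform_wenum // card_self_dual // natrX.
Qed.
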